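(* Let $H$ and $K$ be subgroups of a finite group $G$ such that $HK$ is a subgroup and $|H|_2=|H\cap K|_2$. Then $H\cap K$ is a perfect code of $K$ if and only if $H$ is a perfect code of $HK$.
   Context: $|X|_2$ denotes the largest power of $2$ dividing $|X|$. For a group $G$ with identity $e$ and an inverse-closed subset $S\subseteq G\setminus\{e\}$, the Cayley graph $\mathrm{Cay}(G,S)$ has vertex set $G$ and edges $\{g,sg\}$ for $s\in S$, $g\in G$. A perfect code in a graph is an independent set $C$ of vertices such that every vertex outside $C$ is adjacent to exactly one vertex of $C$. A subgroup $H$ of $G$ is a perfect code of $G$ if some Cayley graph of $G$ admits $H$ as a perfect code. *)

From mathcomp Require Import all_boot all_fingroup.
Set Implicit Arguments. Unset Strict Implicit. Unset Printing Implicit Defensive.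
Local Open Scope group_scope.

Section PerfectCode.
Variable gT : finGroupType.

(* Adjacency in Cay(G,S): edge {g, s g} for s in S, i.e. x ~ y iff y x^-1 in S. *)
Definition cay_adj (S : {set gT}) (x y : gT) : bool := y * x^-1 \in S.

Definition cayley_set (G S : {set gT}) : Prop :=
  S \subset G :\ 1 /\ [set s^-1 | s in S] = S.

Definition perfect_code_in (G S C : {set gT}) : Prop :=
  [/\ C \subset G,
      (forall x y, x \in C -> y \in C -> ~~ cay_adj S x y)
    & (forall x, x \in G :\: C -> #|[set c in C | cay_adj S c x]| = 1%N)].

Definition group_perfect_code (G H : {set gT}) : Prop :=
  exists S : {set gT}, cayley_set G S /\ perfect_code_in G S H.

End PerfectCode.

From mathcomp Require Import all_boot all_fingroup all_solvable.
Set Implicit Arguments. Unset Strict Implicit. Unset Printing Implicit Defensive.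
Local Open Scope group_scope.

(* A subgroup A of G is a perfect code iff some inverse-closed S in G \ A meets
   every right coset Aw in G \ A exactly once.  Such an S exists iff every
   self-inverse double coset AuA made of an odd number |A : A :&: A^u| of right
   cosets contains an involution of Au: counting S inside AuA gives necessity,
   and for sufficiency S is built greedily, a right coset Au being paired with
   a coset Av of the inverse double coset, or covered by an involution.

   A symmetric transversal T for D = H :&: K in K is one for H in HK, because
   H(hk) meets K in Dk.  Conversely, let u in K \ D with u^-1 in DuD and
   |D : D :&: D^u| odd.  A Sylow 2-subgroup Q of D :&: D^u is Sylow in D, hence
   in H since |H|_2 = |D|_2, so |H : H :&: H^u| is odd and Hu contains an
   involution w.  The elements fixing or swapping the cosets H and Hu form a
   group N in which C = H :&: H^u has index 2; so does C :&: K in N :&: K,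
   as u^-1 in DuD yields a swapping element of K.  As Q <= C :&: K, a Sylow
   2-subgroup of N :&: K is Sylow in N and contains a conjugate of w: an
   involution of K swapping H and Hu, that is, an involution of Du. *)

Section PerfectCodes.
Variable gT : finGroupType.
Implicit Types (A G H K : {group gT}) (R S T U V : {set gT}) (t u v w x y : gT).

Lemma dcosetP A x y :
  reflect (exists2 a, a \in A & exists2 b, b \in A & y = a * x * b) (y \in A :* x * A).
Proof.
apply: (iffP mulsgP) => [[z b /rcosetP[a Aa ->] Ab ->] | [a Aa [b Ab ->]]].
  by exists a => //; exists b.
by exists (a * x) b; rewrite // mem_rcoset mulgK.
Qed.

Lemma rcoset_dcoset A u y : y \in A :* u -> y \in A :* u * A.
Proof. exact: subsetP (mulG_subl _ _) y. Qed.

Lemma dcoset_refl A x : x \in A :* x * A.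
Proof. exact: rcoset_dcoset (rcoset_refl A x). Qed.

Lemma dcoset_transl A x y : y \in A :* x * A -> A :* y * A = A :* x * A.
Proof.
case/dcosetP=> a Aa [b Ab ->].
by rewrite rcosetM rcosetM (rcoset_id Aa) -!mulgA (lcoset_id Ab).
Qed.

Lemma dcoset_sym A x y : (y \in A :* x * A) = (x \in A :* y * A).
Proof. by apply/idP/idP => /dcoset_transl ->; apply: dcoset_refl. Qed.

Lemma dcosetV A x : (A :* x * A)^-1 = A :* x^-1 * A.
Proof. by rewrite !invMg invGid invg_set1 mulgA. Qed.

Lemma mem_dcosetV A x y : (y \in A :* x^-1 * A) = (y^-1 \in A :* x * A).
Proof. by rewrite -dcosetV mem_invg. Qed.

Lemma mulg_dcoset A x : A * (A :* x * A) = A :* x * A.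
Proof. by rewrite !mulgA mulGid. Qed.

Lemma card_dcoset A x : #|A :* x * A| = (#|A| * #|A : A :&: A :^ x|)%N.
Proof.
have ->: A :* x * A = x *: (A :^ x * A) by rewrite conjsgE mulgA lcosetKV.
apply/eqP; rewrite card_lcoset -(eqn_pmul2r (cardG_gt0 (A :^ x :&: A))).
by rewrite -mul_cardG cardJg -mulnA (setIC A) (mulnC #|A : _|) Lagrange ?subsetIr.
Qed.

Lemma card_rcoset_dcoset A u x :
  #|A :* u :&: A :* x * A| = (#|A| * (u \in A :* x * A)%g)%N.
Proof.
case: (boolP (u \in A :* x * A)) => [/dcoset_transl <- | xAu].
  by rewrite muln1 (setIidPl (mulG_subl _ _)) card_rcoset.
rewrite muln0; apply/eqP; rewrite cards_eq0; apply/eqP/setP => y; rewrite !inE.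
apply: contraNF xAu => /andP[uAy yAx].
by rewrite -(dcoset_transl yAx) (dcoset_transl (rcoset_dcoset uAy)) dcoset_refl.
Qed.

Lemma dcoset_subD G A x : A \subset G -> x \in G :\: A -> A :* x * A \subset G :\: A.
Proof.
move=> sAG /setDP[Gx nAx]; apply/subsetP => _ /dcosetP[a Aa [b Ab ->]].
have [Ga Gb] := (subsetP sAG a Aa, subsetP sAG b Ab).
by rewrite inE (groupM (groupM Ga Gx) Gb) andbT (groupMr _ Ab) (groupMl _ Aa).
Qed.

Lemma groupV_setD G A x : (x^-1 \in G :\: A) = (x \in G :\: A).
Proof. by rewrite !inE !groupV. Qed.

Definition symmetric_transversal (A U S : {set gT}) :=
  [/\ S \subset U, S^-1 = S & {in U, forall w, #|S :&: A :* w| = 1%N}].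

Lemma imset_invg S : [set s^-1 | s in S] = S^-1.
Proof.
apply/setP => y; rewrite mem_invg; apply/imsetP/idP => [[s Ss ->] | Sy].
  by rewrite invgK.
by exists y^-1; rewrite ?invgK.
Qed.

Lemma card_cay_adj A S x :
  S^-1 = S -> #|[set c in A | cay_adj S c x]| = #|S :&: A :* x^-1|.
Proof.
move=> invS; rewrite -[LHS](card_imset _ (mulIg x^-1)); apply: eq_card => y.
rewrite !inE mem_rcoset invgK; apply/imsetP/andP => [[c] | [Sy Ayx]].
  rewrite inE /cay_adj => /andP[Ac Sxc] ->; rewrite mulgKV Ac.
  by rewrite -invS mem_invg invMg invgK.
exists (y * x); last by rewrite mulgK.
by rewrite inE Ayx /cay_adj invMg mulKVg -mem_invg invS.
Qed.

Lemma group_perfect_codeP G A :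
  A \subset G -> group_perfect_code G A <-> exists S, symmetric_transversal A (G :\: A) S.
Proof.
move=> sAG; split => [[S [[sSG1 invS] [_ indepA perfA]]] | [S [sSGA invS oneS]]].
  rewrite imset_invg in invS; exists S; split => //.
    apply/subsetP => s Ss; rewrite inE (subsetP (subset_trans sSG1 (subsetDl _ _))) //.
    rewrite andbT; apply/negP => As.
    by have := indepA 1 s (group1 A) As; rewrite /cay_adj invg1 mulg1 Ss.
  by move=> w GAw; rewrite -[w]invgK -card_cay_adj // perfA // groupV_setD.
exists S; split; first split; rewrite ?imset_invg //.
  apply/subsetP => s Ss; have /setDP[Gs nAs] := subsetP sSGA s Ss.
  by rewrite !inE Gs andbT; apply: contraNneq nAs => ->.
split=> // [x y Ax Ay | x GAx]; last by rewrite card_cay_adj // oneS // groupV_setD.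
apply/negP => /(subsetP sSGA)/setDP[_]; apply/negP.
by rewrite groupM ?groupV.
Qed.

Lemma stable_rcoset_sub A U w : A * U \subset U -> w \in U -> A :* w \subset U.
Proof. by move=> sAU Uw; apply: subset_trans sAU; apply: mulgS; rewrite sub1set. Qed.

Lemma stable_rcoset_mem A R w y : A * R \subset R -> y \in A :* w -> y \in R -> w \in R.
Proof.
rewrite mem_rcoset => sAR Ayw Ry; apply: (subsetP sAR).
by rewrite -[w](mulgKV y) -[w * y^-1]invgK invMg invgK mem_mulg ?groupV.
Qed.

Lemma stableD A U R : A * U \subset U -> A * R \subset R -> A * (U :\: R) \subset U :\: R.
Proof.
move=> sAU sAR; apply/subsetP => _ /mulsgP[a w Aa /setDP[Uw nRw] ->].
rewrite inE (subsetP sAU) ?mem_mulg // andbT; apply: contra nRw.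
by apply: stable_rcoset_mem sAR _; rewrite mem_rcoset mulgK.
Qed.

Lemma transversal_uniq A U S s t :
  symmetric_transversal A U S -> t \in U -> s \in S -> t \in S -> s \in A :* t -> s = t.
Proof.
case=> _ _ oneS Ut Ss St Ats; have /eqP/cards1P[z Sz] := oneS t Ut.
have: s \in S :&: A :* t by rewrite inE Ss.
have: t \in S :&: A :* t by rewrite inE St rcoset_refl.
by rewrite Sz !inE => /eqP-> /eqP->.
Qed.

Lemma card_stable_transversal A U S V :
  symmetric_transversal A U S -> V \subset U -> A * V \subset V ->
  #|V| = (#|A| * #|S :&: V|)%N.
Proof.
move=> trS sVU sAV; have [sSU _ oneS] := trS.
rewrite -cardsX -(card_in_imset (f := fun p => p.1 * p.2)).
  apply: eq_card => y; apply/idP/imsetP => [Vy | [[a s] /setXP[Aa /setIP[_ Vs]] ->]];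
    last exact: (subsetP sAV) (mem_mulg Aa Vs).
  have /eqP/cards1P[s Sy] := oneS y (subsetP sVU y Vy).
  have /setIP[Ss Ays]: s \in S :&: A :* y by rewrite Sy set11.
  have Vs : s \in V := subsetP (stable_rcoset_sub sAV Vy) s Ays.
  exists (y * s^-1, s); last by rewrite /= mulgKV.
  by rewrite !inE Ss Vs !andbT /= -groupV invMg invgK -mem_rcoset.
move=> [a s] [b t] /setXP[Aa /setIP[Ss Vs]] /setXP[Ab /setIP[St Vt]] /= eq_ab.
have st : s = t.
  apply: transversal_uniq trS (subsetP sVU t Vt) Ss St _.
  by rewrite mem_rcoset -(mulKg a s) eq_ab !mulgA mulgK groupM ?groupV.
by move: eq_ab; rewrite st => /mulIg->.
Qed.

Lemma odd_symmetric_sqr1 S : S^-1 = S -> odd #|S| -> exists2 t, t \in S & t * t = 1.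
Proof.
move=> invS oddS; case: (boolP [exists t in S, t * t == 1]) => [/exists_inP[t St /eqP]|].
  by exists t.
rewrite negb_exists_in => /forall_inP noSqr1; suff: ~~ odd #|S| by rewrite oddS.
(* Inversion is then fixed-point-free on S, which splits as P and P^-1. *)
pose P := [set s in S | enum_rank s < enum_rank s^-1].
have memSV y : (y^-1 \in S) = (y \in S) by rewrite -mem_invg invS.
have rankV y : y \in S -> enum_rank y != enum_rank y^-1.
  by move=> Sy; rewrite (inj_eq enum_rank_inj) eq_sym eq_invg_mul noSqr1.
have ->: S = P :|: P^-1.
  apply/setP => y; rewrite !inE invgK memSV -andb_orr.
  by case Sy: (y \in S); rewrite //= -neq_ltn rankV.
rewrite cardsU card_invg; have ->: P :&: P^-1 = set0.
  apply/setP => y; rewrite !inE invgK; apply/negP => /and3P[/andP[_ lt1] _ lt2].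
  by have := ltn_trans lt1 lt2; rewrite ltnn.
by rewrite cards0 subn0 addnn odd_double.
Qed.

Lemma dcoset_sqr1 A u t :
  t \in A :* u * A -> t * t = 1 -> exists2 t', t' \in A :* u & t' * t' = 1.
Proof.
case/dcosetP=> a Aa [b Ab ->] tt; exists ((a * u * b) ^ b^-1); last first.
  by rewrite -conjMg tt conj1g.
by rewrite conjgE invgK mem_rcoset !mulgA mulgK mulgK groupM.
Qed.

Lemma perfect_code_sqr1 G A S u :
  A \subset G -> symmetric_transversal A (G :\: A) S -> u \in G :\: A ->
  u^-1 \in A :* u * A -> odd #|A : A :&: A :^ u| ->
  exists2 t, t \in A :* u & t * t = 1.
Proof.
move=> sAG trS GAu uVu oddAu; have [_ invS _] := trS.
have sAV : A * (A :* u * A) \subset A :* u * A by rewrite mulg_dcoset.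
have := card_stable_transversal trS (dcoset_subD sAG GAu) sAV.
rewrite card_dcoset => /eqP; rewrite eqn_pmul2l ?cardG_gt0 // => /eqP cardSV.
have invSV : (S :&: A :* u * A)^-1 = S :&: A :* u * A.
  by rewrite invIg invS dcosetV (dcoset_transl uVu).
rewrite cardSV in oddAu; have [t /setIP[_ Vt] tt] := odd_symmetric_sqr1 invSV oddAu.
exact: dcoset_sqr1 Vt tt.
Qed.

(* The invariant of the greedy construction of a symmetric transversal of U. *)
Definition balanced (A U : {set gT}) := forall x,
  #|U :&: A :* x * A| = #|U :&: A :* x^-1 * A| /\
  (x^-1 \in A :* x * A ->
     (2 * #|A|)%N %| #|U :&: A :* x * A| \/ exists2 t, t \in A :* x * A & t * t = 1).

Lemma balancedD A U R : R \subset U -> balanced A R -> balanced A U -> balanced A (U :\: R).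
Proof.
move=> sRU balR balU x; have [eqR sqrR] := balR x; have [eqU sqrU] := balU x.
have cardD y :
    #|(U :\: R) :&: A :* y * A| = #|U :&: A :* y * A| - #|R :&: A :* y * A|.
  by rewrite setIDAC cardsD setIAC (setIidPr sRU).
rewrite !cardD; split=> [|xVx]; first by rewrite eqU eqR.
case: (sqrR xVx) => [dvdR | ?]; last by right.
case: (sqrU xVx) => [dvdU | ?]; last by right.
by left; apply: dvdn_sub.
Qed.

Lemma balanced_rcoset A u t : t \in A :* u -> t * t = 1 -> balanced A (A :* u).
Proof.
move=> Aut tt; have uVu : u^-1 \in A :* u * A.
  apply/dcosetP; exists (t * u^-1); rewrite -?mem_rcoset //.
  by exists (t * u^-1); rewrite -?mem_rcoset // mulgKV mulgA tt mul1g.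
have memV x : (u \in A :* x^-1 * A) = (u \in A :* x * A).
  by rewrite mem_dcosetV (dcoset_sym _ x) -(dcoset_transl uVu) dcoset_sym.
move=> x; rewrite !card_rcoset_dcoset memV; split=> // _.
have [uAx | _] := boolP (u \in A :* x * A); last by left; rewrite muln0 dvdn0.
by right; exists t; rewrite // -(dcoset_transl uAx) rcoset_dcoset.
Qed.

Lemma balanced_pair A u v :
  v \in A :* u^-1 * A -> v \notin A :* u -> balanced A (A :* u :|: A :* v).
Proof.
move=> vAu nAuv.
have disjAuv : A :* u :&: A :* v = set0.
  apply/setP => y; rewrite in_set0; apply/setIP => -[Auy Avy].
  by rewrite -(rcoset_transl _ Avy) Auy in nAuv.
have cardU y : #|(A :* u :|: A :* v) :&: A :* y * A| =
    (#|A| * (u \in A :* y * A)%g + #|A| * (v \in A :* y * A)%g)%N.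
  by rewrite setIUl cardsU -!card_rcoset_dcoset setIACA disjAuv set0I cards0 subn0.
have memV y : (v \in A :* y * A) = (u \in A :* y^-1 * A).
  by rewrite dcoset_sym (dcoset_transl vAu) mem_dcosetV dcoset_sym.
move=> x; rewrite !cardU !memV invgK addnC; split=> // xVx.
by left; rewrite (dcoset_transl xVx) addnn -mul2n mulnA dvdn_mulr.
Qed.

Lemma symmetric_transversal_rcoset A u t :
  t \in A :* u -> t * t = 1 -> symmetric_transversal A (A :* u) [set t].
Proof.
move=> Aut tt; split; first by rewrite sub1set.
  by rewrite invg_set1 (_ : t^-1 = t) //; apply/eqP; rewrite eq_invg_mul tt.
by move=> w /rcoset_eqP->; rewrite (setIidPl _) ?cards1 ?sub1set.
Qed.

Lemma symmetric_transversal_pair A u v s :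
  s \in A :* u -> s^-1 \in A :* v -> v \notin A :* u ->
  symmetric_transversal A (A :* u :|: A :* v) [set s; s^-1].
Proof.
move=> Aus Avs' nAuv.
have nAus' : s^-1 \notin A :* u by rewrite (rcoset_transl _ Avs').
have nAvs : s \notin A :* v by rewrite (rcoset_transl _ Aus) rcoset_sym.
have one y z (B : {set gT}) : y \in B -> z \notin B -> #|[set y; z] :&: B| = 1%N.
  move=> By nBz; apply/eqP/cards1P; exists y; apply/setP => w; rewrite !inE.
  case: (eqVneq w y) => [-> | _ /=]; first by rewrite By.
  by case: eqP => // ->; apply/negbTE.
split; first by rewrite subUset !sub1set !inE Aus Avs' orbT.
  by rewrite invUg !invg_set1 invgK setUC.
by move=> w /setUP[] /rcoset_eqP->; [apply: one | rewrite setUC; apply: one].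
Qed.

Lemma symmetric_transversalU A U R T S :
  A * R \subset R -> R \subset U -> symmetric_transversal A R T ->
  symmetric_transversal A (U :\: R) S -> symmetric_transversal A U (T :|: S).
Proof.
move=> sAR sRU [sTR invT oneT] [sSUR invS oneS]; split.
- by rewrite subUset (subset_trans sTR sRU) (subset_trans sSUR (subsetDl _ _)).
- by rewrite invUg invT invS.
move=> w Uw; rewrite setIUl cardsU; have [Rw | nRw] := boolP (w \in R).
  have ->: S :&: A :* w = set0.
    apply/setP => y; rewrite in_set0; apply/setIP => -[/(subsetP sSUR)/setDP[_ nRy]].
    by move/(subsetP (stable_rcoset_sub sAR Rw)); apply/negP.
  by rewrite setI0 cards0 subn0 addn0 oneT.
have ->: T :&: A :* w = set0.
  apply/setP => y; rewrite in_set0; apply/setIP => -[/(subsetP sTR) Ry Awy].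
  by rewrite (stable_rcoset_mem sAR Awy Ry) in nRw.
by rewrite set0I cards0 subn0 add0n oneS // inE nRw.
Qed.

Lemma balanced_cases A U u : balanced A U -> u \in U ->
  (exists2 t, t \in A :* u & t * t = 1) \/
  (exists2 v, v \in U :&: A :* u^-1 * A & v \notin A :* u).
Proof.
move=> balU Uu; have [eqU sqrU] := balU u.
have UAu : 0 < #|U :&: A :* u * A| by apply/card_gt0P; exists u; rewrite inE Uu dcoset_refl.
have [uVu | nuVu] := boolP (u^-1 \in A :* u * A).
  case: (sqrU uVu) => [dvdU | [t uAt tt]]; last by left; apply: dcoset_sqr1 uAt tt.
  right; rewrite (dcoset_transl uVu); apply/subsetPn.
  apply: contraL dvdU => /subset_leq_card; rewrite card_rcoset => leUA.
  apply/negP => /(dvdn_leq UAu) le2A.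
  by have := leq_trans le2A leUA; rewrite leqNgt ltn_Pmull ?cardG_gt0.
rewrite eqU in UAu; have [v Vv] := card_gt0P UAu; have /setIP[_ vAu] := Vv.
right; exists v => //; apply: contra nuVu => Auv.
by rewrite -(dcoset_transl (rcoset_dcoset Auv)) (dcoset_transl vAu) dcoset_refl.
Qed.

Lemma balanced_piece A U u : A * U \subset U -> balanced A U -> u \in U ->
  exists R T, [/\ u \in R, R \subset U, A * R \subset R, balanced A R
                & symmetric_transversal A R T].
Proof.
move=> sAU balU Uu; have sAuU := stable_rcoset_sub sAU Uu.
case: (balanced_cases balU Uu) => [[t Aut tt] | [v /setIP[Uv vAu] nAuv]].
  exists (A :* u), [set t]; split; rewrite ?rcoset_refl ?mulgA ?mulGid //.
    exact: balanced_rcoset Aut tt.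
  exact: symmetric_transversal_rcoset Aut tt.
have [b Ab [c Ac vE]] := dcosetP _ _ _ vAu.
exists (A :* u :|: A :* v), [set c^-1 * u; (c^-1 * u)^-1]; split.
- by rewrite inE rcoset_refl.
- by rewrite subUset sAuU stable_rcoset_sub.
- by rewrite mulgU !mulgA mulGid.
- exact: balanced_pair vAu nAuv.
apply: symmetric_transversal_pair nAuv; first by rewrite mem_rcoset mulgK groupV.
by rewrite mem_rcoset vE !invMg !invgK !mulgA mulgK mulVg mul1g groupV.
Qed.

Lemma balanced_symmetric_transversal A U :
  A * U \subset U -> balanced A U -> exists S, symmetric_transversal A U S.
Proof.
have [n] := ubnP #|U|; elim: n U => // n IHn U /ltnSE leUn sAU balU.
have [-> | [u Uu]] := set_0Vmem U.
  exists set0; split=> // [|w]; last by rewrite inE.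
  by apply/setP => y; rewrite mem_invg !inE.
have [R [T [Ru sRU sAR balR trT]]] := balanced_piece sAU balU Uu.
have [|S trS] := IHn (U :\: R) _ (stableD sAU sAR) (balancedD sRU balR balU).
  rewrite cardsD (setIidPr sRU); apply: leq_trans leUn.
  by rewrite ltn_subrL; apply/andP; split; apply/card_gt0P; exists u.
by exists (T :|: S); apply: symmetric_transversalU trS.
Qed.

Lemma balanced_group_complement G A :
  A \subset G ->
  (forall u, u \in G :\: A -> u^-1 \in A :* u * A -> odd #|A : A :&: A :^ u| ->
     exists2 t, t \in A :* u & t * t = 1) ->
  balanced A (G :\: A).
Proof.
move=> sAG sqr1 x.
have GAdcoset y :
    (G :\: A) :&: A :* y * A = if y \in G :\: A then A :* y * A else set0.
  have [GAy | nGAy] := boolP (y \in G :\: A); first exact/setIidPr/(dcoset_subD sAG GAy).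
  apply/setP => z; rewrite in_set0; apply/setIP => -[GAz yAz]; case/negP: nGAy.
  by apply: (subsetP (dcoset_subD sAG GAz)); rewrite (dcoset_transl yAz) dcoset_refl.
rewrite !GAdcoset groupV_setD; split.
  by case: ifP; rewrite ?cards0 // -dcosetV card_invg.
case: ifP => [GAx xVx | _ _]; last by left; rewrite cards0 dvdn0.
have [oddx | evenx] := boolP (odd #|A : A :&: A :^ x|).
  by right; have [t Axt tt] := sqr1 x GAx xVx oddx; exists t; rewrite ?rcoset_dcoset.
by left; rewrite card_dcoset mulnC dvdn_pmul2l ?cardG_gt0 // dvdn2.
Qed.

Lemma perfect_code_of_sqr1 G A :
  A \subset G ->
  (forall u, u \in G :\: A -> u^-1 \in A :* u * A -> odd #|A : A :&: A :^ u| ->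
     exists2 t, t \in A :* u & t * t = 1) ->
  exists S, symmetric_transversal A (G :\: A) S.
Proof.
move=> sAG sqr1; apply: balanced_symmetric_transversal (balanced_group_complement sAG sqr1).
by apply: stableD; rewrite ?mulSGid ?mulGid.
Qed.

Lemma Sylow_p'index (p : nat) G (L P : {group gT}) :
  p.-Sylow(G) P -> P \subset L -> L \subset G -> p^'.-nat #|G : L|.
Proof.
by case/and3P=> _ _ p'GP sPL sLG; move: p'GP; rewrite -(Lagrange_index sLG sPL) pnatM => /andP[].
Qed.

Lemma p'index_Sylow (p : nat) G (L P : {group gT}) :
  L \subset G -> p^'.-nat #|G : L| -> p.-Sylow(L) P -> p.-Sylow(G) P.
Proof.
move=> sLG p'GL /and3P[sPL pP p'LP].
by rewrite /pHall (subset_trans sPL sLG) pP -(Lagrange_index sLG sPL) pnatM p'GL.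
Qed.

Lemma Sylow_fixer_meet H K u :
  (#|H|`_2)%N = (#|H :&: K|`_2)%N -> u \in K ->
  odd #|H :&: K : (H :&: K) :&: (H :&: K) :^ u| ->
  exists Q : {group gT}, 2.-Sylow(H) Q /\ Q \subset H :&: H :^ u :&: K.
Proof.
move=> eq2 Ku; rewrite odd_2'nat => p'DL.
have [Q sylQ] := Sylow_exists 2 ((H :&: K) :&: (H :&: K) :^ u)%G.
have sylQD := p'index_Sylow (subsetIl _ _) p'DL sylQ.
exists Q; split.
  by rewrite pHallE (subset_trans (pHall_sub sylQD) (subsetIl _ _)) (card_Hall sylQD) eq2 /=.
apply: subset_trans (pHall_sub sylQ) _; rewrite !subsetI -andbA; apply/and3P; split.
- exact: subset_trans (subsetIl _ _) (subsetIl _ _).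
- by apply: subset_trans (subsetIr _ _) _; rewrite conjSg subsetIl.
- exact: subset_trans (subsetIl _ _) (subsetIr _ _).
Qed.

Section Swapper.

Variables (H : {group gT}) (u : gT).
Hypothesis nHu : u \notin H.

(* Right multiplication by g fixes the cosets H and Hu iff g \in H :&: H :^ u,
   and swaps them iff g \in swapper H u. *)
Definition swapper := H :* u :&: u^-1 *: H.

Local Notation C := (H :&: H :^ u).
Local Notation W := swapper.

Lemma mem_swapper g : (g \in W) = (g * u^-1 \in H) && (u * g \in H).
Proof. by rewrite inE mem_rcoset mem_lcoset invgK. Qed.

Lemma mem_fixer g : (g \in C) = (g \in H) && (u * g * u^-1 \in H).
Proof. by rewrite inE mem_conjg conjgE invgK mulgA. Qed.

Lemma swapperV g : g \in W -> g^-1 \in W.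
Proof.
rewrite !mem_swapper => /andP[gu ug].
by rewrite -invMg groupV ug /= -[u * g^-1]invgK invMg invgK groupV.
Qed.

Lemma swapperM g h : g \in W -> h \in W -> g * h \in C.
Proof.
rewrite !mem_swapper mem_fixer => /andP[gu ug] /andP[hu uh].
have ->: g * h = (g * u^-1) * (u * h) by rewrite mulgA mulgKV.
have ->: u * (g * u^-1 * (u * h)) * u^-1 = (u * g) * (h * u^-1) by rewrite !mulgA mulgKV.
by apply/andP; split; apply: groupM.
Qed.

Lemma fixer_swapperM c g : c \in C -> g \in W -> c * g \in W.
Proof.
rewrite mem_fixer !mem_swapper => /andP[Hc uc] /andP[gu ug].
have ->: u * (c * g) = (u * c * u^-1) * (u * g) by rewrite !mulgA mulgKV.
by rewrite -mulgA; apply/andP; split; apply: groupM.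
Qed.

Lemma swapper_fixerM g c : g \in W -> c \in C -> g * c \in W.
Proof.
rewrite mem_fixer !mem_swapper => /andP[gu ug] /andP[Hc uc].
have ->: g * c * u^-1 = (g * u^-1) * (u * c * u^-1) by rewrite !mulgA mulgKV.
by rewrite [u * (g * c)]mulgA; apply/andP; split; apply: groupM.
Qed.

Lemma fixer_swapper_disjoint : C :&: W = set0.
Proof.
apply/setP => g; rewrite in_set0 in_setI mem_fixer mem_swapper.
apply/negP => /and3P[/andP[Hg _] gu _]; case/negP: nHu.
have ->: u = (g * u^-1)^-1 * g by rewrite invMg invgK mulgKV.
by apply: groupM; rewrite ?groupV.
Qed.

Lemma swapper_rcoset s : s \in W -> W = C :* s.
Proof.
move=> Ws; apply/setP => g; rewrite mem_rcoset; apply/idP/idP => [Wg | Cgs].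
  exact: swapperM Wg (swapperV Ws).
by rewrite -(mulgKV s g) fixer_swapperM.
Qed.

Lemma card_fixer_swapperI K s : s \in W :&: K -> #|(C :|: W) :&: K| = (2 * #|C :&: K|)%N.
Proof.
case/setIP=> Ws Ks; rewrite setIUl (swapper_rcoset Ws) cardsU.
have ->: C :* s :&: K = (C :&: K) :* s.
  by apply/setP => g; rewrite !in_setI !mem_rcoset !in_setI (groupMr _ (groupVr Ks)).
have ->: (C :&: K) :&: (C :&: K) :* s = set0.
  apply/eqP; rewrite -subset0 -fixer_swapper_disjoint (swapper_rcoset Ws).
  by rewrite setISS ?mulSg ?subsetIl.
by rewrite cards0 subn0 card_rcoset addnn mul2n.
Qed.

Lemma group_set_fixer_swapper : group_set (C :|: W).
Proof.
apply/group_setP; split=> [|g h]; first by rewrite in_setU group1.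
rewrite !in_setU => /orP[Cg | Wg] /orP[Ch | Wh].
- by rewrite (groupM Cg Ch).
- by rewrite fixer_swapperM ?orbT.
- by rewrite swapper_fixerM ?orbT.
- by rewrite swapperM.
Qed.

Lemma swapperJ w g : w \in W -> g \in C :|: W -> w ^ g \in W.
Proof.
move=> Ww; rewrite conjgE mulgA in_setU => /orP[Cg | Wg].
  exact: swapper_fixerM (fixer_swapperM (groupVr Cg) Ww) Cg.
exact: fixer_swapperM (swapperM (swapperV Wg) Ww) Wg.
Qed.

Lemma rcoset_sqr1_swapper t : t \in H :* u -> t * t = 1 -> t \in W.
Proof.
move=> Hut tt; have tV : t^-1 = t by apply/eqP; rewrite eq_invg_mul tt.
by rewrite mem_swapper -mem_rcoset Hut -{1}tV -[u]invgK -invMg groupV -mem_rcoset.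
Qed.

Lemma dcoset_swapper (A : {group gT}) :
  A \subset H -> u^-1 \in A :* u * A -> exists2 s, s \in A :* u & s \in W.
Proof.
move=> sAH /dcosetP[a Aa [b Ab uV]]; exists (a * u); first by rewrite mem_rcoset mulgK.
rewrite mem_swapper mulgK (subsetP sAH) //=.
by rewrite -(mulgK b (a * u)) -uV mulgA mulgV mul1g groupV (subsetP sAH).
Qed.

Lemma swapper_sqr1_meet K s w :
  s \in W :&: K -> 2^'.-nat #|C : C :&: K| -> w \in W -> w * w = 1 ->
  exists2 w', w' \in W :&: K & w' * w' = 1.
Proof.
move=> WKs p'CK Ww ww; pose N := Group group_set_fixer_swapper.
have cardN : #|N| = (2 * #|C|)%N.
  have := @card_fixer_swapperI [set: gT]%G s; rewrite !setIT; apply.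
  by case/setIP: WKs.
have p'NK : 2^'.-nat #|N : N :&: K|.
  by rewrite !indexgI -!divgI in p'CK *; rewrite cardN /= (card_fixer_swapperI WKs) divnMl.
have [P sylP] := Sylow_exists 2 (N :&: K)%G.
have sylPN := p'index_Sylow (subsetIl _ _) p'NK sylP.
have [||g Ng sub] := Sylow_Jsub sylPN (_ : <[w]> \subset N) (_ : 2.-group <[w]>).
- by rewrite cycle_subG in_setU Ww orbT.
- apply: pnat_dvd (pnat_id (isT : prime 2)).
  by rewrite order_dvdn expgS expg1 ww.
have Pw : w ^ g \in P by apply: (subsetP sub); rewrite memJ_conjg cycle_id.
exists (w ^ g); last by rewrite -conjMg ww conj1g.
by rewrite inE swapperJ //= (subsetP (subset_trans (pHall_sub sylP) (subsetIr _ _))).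
Qed.

End Swapper.

Lemma symmetric_transversal_mul H K T :
  symmetric_transversal (H :&: K) (K :\: H :&: K) T ->
  symmetric_transversal H (H * K :\: H) T.
Proof.
case=> sTK invT oneT; split=> //.
  apply/subsetP => y /(subsetP sTK) /setDP[Ky nDy].
  by rewrite !inE (subsetP (mulG_subr H K)) // andbT; apply: contra nDy => Hy; rewrite inE Hy.
move=> _ /setDP[/mulsgP[h k Hh Kk ->] nHhk].
have nDk : k \in K :\: H :&: K.
  by rewrite !inE Kk andbT; apply: contra nHhk => /andP[Hk _]; rewrite groupM.
rewrite rcosetM (rcoset_id Hh) -(oneT k nDk); apply: eq_card => y.
rewrite !in_setI !mem_rcoset in_setI; case Ty: (y \in T) => //=.
have /setDP[Ky _] := subsetP sTK y Ty.
by rewrite (groupM Ky (groupVr Kk)) andbT.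
Qed.

Lemma symmetric_transversal_meet G H K S :
  H \subset G -> K \subset G -> (#|H|`_2)%N = (#|H :&: K|`_2)%N ->
  symmetric_transversal H (G :\: H) S ->
  exists T, symmetric_transversal (H :&: K) (K :\: H :&: K) T.
Proof.
move=> sHG sKG eq2 trS; apply: perfect_code_of_sqr1 (subsetIr H K) _.
move=> u /setDP[Ku nDu] uVu oddDu; have sDH := subsetIl H K.
have nHu : u \notin H by apply: contra nDu => Hu; rewrite inE Hu.
have [Q [sylQ]] := Sylow_fixer_meet eq2 Ku oddDu; rewrite subsetI => /andP[sQC sQK].
have oddHC : odd #|H : H :&: H :^ u|.
  by rewrite odd_2'nat (Sylow_p'index sylQ sQC) ?subsetIl.
have p'CK : 2^'.-nat #|H :&: H :^ u : H :&: H :^ u :&: K|.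
  apply: Sylow_p'index (pHall_subl sQC (subsetIl _ _) sylQ) _ (subsetIl _ _).
  by rewrite subsetI sQC sQK.
have GHu : u \in G :\: H by rewrite inE nHu (subsetP sKG).
have uVHu : u^-1 \in H :* u * H by apply: subsetP (mulgSS (mulSg _ sDH) sDH) _ uVu.
have [t Hut tt] := perfect_code_sqr1 sHG trS GHu uVHu oddHC.
have [s Dus Ws] := dcoset_swapper sDH uVu.
have Ks : s \in K.
  by rewrite -(mulgKV u s) groupM // (subsetP (subsetIr H K)) // -mem_rcoset.
have WKs : s \in swapper H u :&: K by rewrite inE Ws.
have [w /setIP[Ww Kw] ww] := swapper_sqr1_meet nHu WKs p'CK (rcoset_sqr1_swapper Hut tt) tt.
exists w => //; move: Ww; rewrite mem_swapper mem_rcoset in_setI => /andP[-> _].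
by rewrite groupM ?groupV.
Qed.

End PerfectCodes.

Local Close Scope group_scope.

Theorem lemma4p3 (gT : finGroupType) (G H K : {group gT}) :
  H \subset G -> K \subset G -> group_set (H * K)%g ->
  (#|H|)`_2 = (#|H :&: K|)`_2 ->
  (group_perfect_code K (H :&: K) <-> group_perfect_code (H * K)%g H).
Proof.
move=> _ _ mulHK eq2; pose X := Group mulHK.
have sHX : H \subset X := mulG_subl K H.
have sKX : K \subset X := mulG_subr H K.
have sDK := subsetIr H K.
split=> [/(group_perfect_codeP sDK) [T trT] | /(group_perfect_codeP sHX) [S trS]].
  by apply/(group_perfect_codeP sHX); exists T; apply: symmetric_transversal_mul.
by apply/(group_perfect_codeP sDK); apply: symmetric_transversal_meet sHX sKX eq2 trS.
Qed.
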